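(* Let $G$ be a graph with an even number of edges. Suppose there is a positive integer $t$ such that $G$ contains at least $t$ pairwise vertex-disjoint induced copies of $F$ and $G$ contains no clique with more than $t$ vertices. Then $G$ is even-decomposable.
   Context: $F$ denotes the disjoint union of two vertex-disjoint copies of $K_{5,5}$. A graph $H$ is even-decomposable if there is a sequence $V(H)=V_0\supset V_1\supset\cdots\supset V_k=\emptyset$ such that for each $0\le i\le k-1$, $H[V_i]$ has an even number of edges and $V_i\setminus V_{i+1}$ is an independent set in $H$. *)

From mathcomp Require Import all_boot.
Set Implicit Arguments. Unset Strict Implicit. Unset Printing Implicit Defensive.

(* A simple graph on a finite vertex type T is a symmetric irreflexive
   relation e : rel T. *)

Definition edge_count (T : finType) (e : rel T) (S : {set T}) : nat :=
  #|[set E in powerset S | (#|E| == 2) &&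
       [forall x in E, forall y in E, (x != y) ==> e x y]]|.

Definition independent (T : finType) (e : rel T) (A : {set T}) : bool :=
  [forall x in A, forall y in A, ~~ e x y].

Definition clique (T : finType) (e : rel T) (A : {set T}) : bool :=
  [forall x in A, forall y in A, (x != y) ==> e x y].

Definition even_decomposable (T : finType) (e : rel T) : Prop :=
  exists (k : nat) (V : nat -> {set T}),
    [/\ V 0 = [set: T], V k = set0 &
        forall i, i < k ->
          [/\ V i.+1 \proper V i, ~~ odd (edge_count e (V i))
            & independent e (V i :\: V i.+1)]].

(* The graph F = two vertex-disjoint copies of K_{5,5}.
   Vertex (c, (s, j)): copy c, side s, index j. *)
Definition FV := ('I_2 * ('I_2 * 'I_5))%type.
Definition Fadj (u v : FV) : bool := (u.1 == v.1) && (u.2.1 != v.2.1).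

Definition induced_copy_F (T : finType) (e : rel T) (f : FV -> T) : Prop :=
  injective f /\ forall u v, e (f u) (f v) = Fadj u v.

From mathcomp Require Import all_boot zify.
Set Implicit Arguments. Unset Strict Implicit. Unset Printing Implicit Defensive.

(* Say S reduces to S' if G[S'] is reached from G[S] by repeatedly deleting a
   nonempty independent set while the number of edges stays even; then G[S] is
   even-decomposable as soon as G[S'] is.  Deleting a vertex of even degree, or two
   nonadjacent vertices whose degrees have equal parity, keeps the edge count even;
   doing this greedily inside a vertex set Z leaves Z as a clique of odd-degree
   vertices.  In particular a triangle-free graph with an even number of edges
   reduces to the empty graph.

   We prove more than claimed: s disjoint induced copies of F together with a bound
   s + 2 on the cliques lying outside them suffice, by induction on s.  Each slice
   {c (a, (b, j)) | a, b} of a copy c of F is an induced 2K2, and the parities of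
   the degrees around a 2K2 always allow an outside vertex q to be deleted together
   with some vertices of that 2K2.  Using three slices of the first copy, the
   outside clique bound drops from s + 3 to s; what remains of the first copy is
   triangle-free and contributes at most 2 more, so the induction hypothesis applies
   to the other s copies. *)

Section EvenDecomposition.
Variables (T : finType) (e : rel T).
Hypotheses (e_sym : symmetric e) (e_irr : irreflexive e).

Local Notation ec := (edge_count e).

(** * Edge counts and degrees *)

Definition deg (S : {set T}) (v : T) : nat := #|[set u in S | e v u]|.

Lemma clique_sub (A B : {set T}) : A \subset B -> clique e B -> clique e A.
Proof.
move=> /subsetP AB /forall_inP cB; apply/forall_inP => x /AB /cB /forall_inP cBx.
by apply/forall_inP => y /AB /cBx.
Qed.

Lemma clique_set2 (u v : T) : u != v -> clique e [set u; v] = e u v.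
Proof.
move=> uv; apply/forall_inP/idP => [/(_ u (set21 u v)) /forall_inP /(_ v (set22 u v))|euv x].
  by rewrite uv.
by case/set2P=> ->; apply/forall_inP => y /set2P[]->;
  rewrite ?eqxx ?(e_sym v u) ?euv ?implybT.
Qed.

Lemma edge_count_setD1 (S : {set T}) v : v \in S -> ec S = ec (S :\ v) + deg S v.
Proof.
move=> vS; rewrite /edge_count -(cardsID [set E : {set T} | v \in E]) addnC.
congr (_ + _).
  apply: eq_card => E; rewrite !inE subsetD1.
  by case: (E \subset S); case: (v \in E); rewrite ?andbF.
rewrite /deg -(@card_in_imset _ _ (fun u => [set v; u])); last first.
  move=> a b; rewrite !inE => /andP[_ va] /andP[_ vb] /setP/(_ a).
  rewrite !inE eqxx orbT => /esym/orP[]/eqP // av.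
  by move: va; rewrite av e_irr.
apply: eq_card => E; rewrite !inE; apply/idP/imsetP.
  case/andP=> /andP[ES /andP[/cards2P[x [y [xy Exy]]] cl]] vE; subst E.
  have exy : e x y by rewrite -clique_set2.
  move: vE ES; rewrite !inE => /orP[]/eqP-> /subsetP ES.
    by exists y; rewrite // inE ES ?set22.
  by exists x; rewrite 1?setUC // inE ES ?set21 // e_sym.
case=> u; rewrite inE => /andP[uS evu] ->.
have vu : v != u by apply: contraTneq evu => ->; rewrite e_irr.
rewrite set21 andbT cards2 vu /= -/(clique e _) clique_set2 // evu andbT.
by apply/subsetP => x; rewrite !inE => /orP[]/eqP->.
Qed.

Lemma odd_edge_count_setD1 (S : {set T}) v :
  v \in S -> odd (ec (S :\ v)) = odd (ec S) (+) odd (deg S v).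
Proof. by move=> vS; rewrite (edge_count_setD1 vS) oddD -addbA addbb addbF. Qed.

Lemma deg_setD1 (S : {set T}) v y : deg S v = deg (S :\ y) v + ((y \in S) && e v y).
Proof.
rewrite /deg (cardsD1 y) addnC inE; congr (_ + _).
by apply: eq_card => u; rewrite !inE andbA.
Qed.

Lemma deg_setD1_nonadj (S : {set T}) v y : ~~ e v y -> deg (S :\ y) v = deg S v.
Proof. by move=> nvy; rewrite (deg_setD1 S v y) (negbTE nvy) andbF addn0. Qed.

Lemma deg_setD1_adj (S : {set T}) v y :
  y \in S -> e v y -> deg S v = (deg (S :\ y) v).+1.
Proof. by move=> yS evy; rewrite (deg_setD1 S v y) yS evy addn1. Qed.

Lemma deg_clique (K : {set T}) v : clique e K -> v \in K -> deg K v = #|K :\ v|.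
Proof.
move=> /forall_inP cK vK; apply: eq_card => u; rewrite !inE.
case uK: (u \in K); rewrite ?andbT ?andbF //.
by have := forall_inP (cK v vK) u uK; case: (eqVneq u v) => [->|]; rewrite ?e_irr.
Qed.

Lemma edge_count_card_le1 (S : {set T}) : #|S| <= 1 -> ec S = 0.
Proof.
move=> S1; apply/eqP; rewrite cards_eq0; apply/eqP/setP => E; rewrite !inE.
apply/negbTE; rewrite negb_and -implybE; apply/implyP => /subset_leq_card ES.
by rewrite ltn_eqF // ltnS (leq_trans ES S1).
Qed.

(** * Reductions *)

Definition even_dec (S : {set T}) : Prop :=
  exists (k : nat) (V : nat -> {set T}),
    [/\ V 0 = S, V k = set0 &
        forall i, i < k ->
          [/\ V i.+1 \proper V i, ~~ odd (ec (V i)) & independent e (V i :\: V i.+1)]].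

Lemma even_dec0 : even_dec set0.
Proof. by exists 0, (fun=> set0). Qed.

Lemma even_dec_setD (S X : {set T}) :
    X \subset S -> X != set0 -> independent e X -> ~~ odd (ec S) ->
  even_dec (S :\: X) -> even_dec S.
Proof.
move=> XS X0 iX eS [k [V [V0 Vk HV]]].
exists k.+1, (fun i => if i is i'.+1 then V i' else S); split=> // -[_|i /HV //].
rewrite V0 setDDr setDv set0U (setIidPr XS); split=> //.
case/set0Pn: X0 => x xX; apply/properP; split; first exact: subsetDl.
by exists x; rewrite ?inE ?xX ?(subsetP XS).
Qed.

Definition reduces (S S' : {set T}) : Prop :=
  [/\ S' \subset S, ~~ odd (ec S') & (even_dec S' -> even_dec S)].

Lemma reduces_refl (S : {set T}) : ~~ odd (ec S) -> reduces S S.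
Proof. by split. Qed.

Lemma reduces_trans (S1 S2 S3 : {set T}) :
  reduces S1 S2 -> reduces S2 S3 -> reduces S1 S3.
Proof.
case=> S21 _ dec12 [S32 eS3 dec23]; split=> //; first exact: subset_trans S32 S21.
by move/dec23/dec12.
Qed.

Lemma reduces_setD (S X : {set T}) :
    X \subset S -> X != set0 -> independent e X -> ~~ odd (ec S) ->
  ~~ odd (ec (S :\: X)) -> reduces S (S :\: X).
Proof. by move=> XS X0 iX eS eSX; split; [apply: subsetDl | | apply: even_dec_setD]. Qed.

Lemma reduces_setD1 (S : {set T}) v :
  v \in S -> ~~ odd (ec S) -> ~~ odd (deg S v) -> reduces S (S :\ v).
Proof.
move=> vS eS ev; apply: reduces_setD; rewrite ?sub1set //.
- by apply/set0Pn; exists v; rewrite set11.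
- rewrite /independent; apply/forall_inP => x /set1P->.
  by apply/forall_inP => y /set1P->; rewrite e_irr.
- by rewrite odd_edge_count_setD1 // (negbTE eS) (negbTE ev).
Qed.

Lemma reduces_setD2 (S : {set T}) u v :
    u \in S -> v \in S -> u != v -> ~~ e u v -> ~~ odd (ec S) ->
  odd (deg S u) = odd (deg S v) -> reduces S (S :\ u :\ v).
Proof.
move=> uS vS uv nuv eS duv; rewrite setDDl.
apply: reduces_setD; rewrite -?setDDl //.
- by apply/subsetP => x /set2P[]->.
- by apply/set0Pn; exists u; rewrite set21.
- rewrite /independent; apply/forall_inP => x /set2P[]->; apply/forall_inP => y /set2P[]->;
    by rewrite ?e_irr // e_sym.
rewrite odd_edge_count_setD1; last by rewrite !inE eq_sym uv.
by rewrite odd_edge_count_setD1 // deg_setD1_nonadj 1?e_sym // (negbTE eS) duv addbb.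
Qed.

Definition clique_num_le (A : {set T}) (n : nat) : Prop :=
  forall B : {set T}, B \subset A -> clique e B -> #|B| <= n.

Lemma clique_num_le_sub (A B : {set T}) n :
  A \subset B -> clique_num_le B n -> clique_num_le A n.
Proof. by move=> AB cB C CA; apply: cB; apply: subset_trans CA AB. Qed.

Lemma clique_num_leU (A B : {set T}) m n :
  clique_num_le A m -> clique_num_le B n -> clique_num_le (A :|: B) (m + n).
Proof.
move=> cA cB C CAB cC; rewrite -(cardsID A C) leq_add //.
  by apply: cA; [apply: subsetIr | apply: clique_sub cC; apply: subsetIl].
apply: cB; last by apply: clique_sub cC; apply: subsetDl.
by apply/subsetP => x; rewrite inE => /andP[xA /(subsetP CAB)]; rewrite inE (negbTE xA).
Qed.

Lemma reduces_to_odd_clique (Z S : {set T}) : ~~ odd (ec S) ->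
  exists S', [/\ reduces S S', S :\: Z \subset S', clique e (S' :&: Z)
               & {in S' :&: Z, forall v, odd (deg S' v)}].
Proof.
have [n] := ubnP #|S|; elim: n S => // n IH S ltSn eS.
have recurse S1 : reduces S S1 -> S :\: Z \subset S1 -> #|S1| < #|S| ->
    exists S', [/\ reduces S S', S :\: Z \subset S', clique e (S' :&: Z)
                 & {in S' :&: Z, forall v, odd (deg S' v)}].
  move=> rSS1 /subsetP ZS1 ltS1S; have [_ eS1 _] := rSS1.
  have [S' [rS1S' /subsetP ZS' cS' oS']] := IH S1 (leq_trans ltS1S ltSn) eS1.
  exists S'; split=> //; first exact: reduces_trans rSS1 rS1S'.
  apply/subsetP => x xSZ; apply: ZS'; rewrite inE (ZS1 x xSZ).
  by move: xSZ; rewrite inE => /andP[->].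
case: (pickP [pred v in S :&: Z | ~~ odd (deg S v)]) => [v /andP[vSZ ev] | allodd].
  move: vSZ; rewrite inE => /andP[vS vZ].
  apply: (recurse _ (reduces_setD1 vS eS ev)); last exact/proper_card/properD1.
  by apply/subsetP => x; rewrite !inE => /andP[xZ ->]; rewrite andbT; apply: contraNneq xZ => ->.
have {}allodd v : v \in S :&: Z -> odd (deg S v).
  by move=> vSZ; move: (allodd v); rewrite /= vSZ /= => /negbFE.
case: (pickP [pred uv : T * T | [&& uv.1 \in S :&: Z, uv.2 \in S :&: Z, uv.1 != uv.2
                                   & ~~ e uv.1 uv.2]]) => [[u v] /and4P[uSZ vSZ uv nuv] | adj].
  have duv : odd (deg S u) = odd (deg S v) by rewrite !allodd.
  move: uSZ vSZ; rewrite !inE => /andP[uS uZ] /andP[vS vZ].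
  apply: (recurse _ (reduces_setD2 uS vS uv nuv eS duv)).
    apply/subsetP => x; rewrite !inE => /andP[xZ ->]; rewrite !andbT.
    by apply/andP; split; apply: contraNneq xZ => ->.
  apply: leq_ltn_trans (proper_card (properD1 uS)); apply: subset_leq_card; exact: subsetDl.
exists S; split; [exact: reduces_refl | exact: subsetDl | | exact: allodd].
apply/forall_inP => x xSZ; apply/forall_inP => y ySZ; apply/implyP => xy.
by move: (adj (x, y)); rewrite /= xSZ ySZ xy /= => /negbFE.
Qed.

Lemma odd_deg_clique_eq0 (K : {set T}) :
    clique e K -> #|K| <= 2 -> {in K, forall v, odd (deg K v)} -> ~~ odd (ec K) ->
  K = set0.
Proof.
move=> cK K2 oK eK; case: (set_0Vmem K) => [//|[v vK]].
have KDv : #|K :\ v| = 1.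
  move: (oK v vK) => /=; move: K2; rewrite deg_clique // (cardsD1 v K) vK add1n.
  by case: #|K :\ v| => [|[|]].
by move: eK; rewrite (edge_count_setD1 vK) deg_clique // edge_count_card_le1 ?KDv.
Qed.

Lemma triangle_free_even_dec (S : {set T}) :
  clique_num_le S 2 -> ~~ odd (ec S) -> even_dec S.
Proof.
move=> cS eS; have [S' [[S'S eS' decS] _]] := reduces_to_odd_clique setT eS.
rewrite setIT => cS' oS'; apply: decS.
by rewrite (odd_deg_clique_eq0 cS' (cS S' S'S cS') oS' eS'); apply: even_dec0.
Qed.

(** * Deleting a vertex next to an induced 2K2 *)

Definition deletable (S : {set T}) (q : T) (R : {set T}) : Prop :=
  exists S', [/\ reduces S S', q \notin S' & S :\: S' \subset R].

Lemma deletable_sub (S R R' : {set T}) q :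
  R \subset R' -> deletable S q R -> deletable S q R'.
Proof. by move=> RR' [S' [rSS' qS' SS'R]]; exists S'; split=> //; apply: subset_trans RR'. Qed.

Lemma reduces_deletable (S S1 R : {set T}) q :
  reduces S S1 -> deletable S1 q R -> deletable S q ((S :\: S1) :|: R).
Proof.
move=> rSS1 [S' [rS1S' qS' /subsetP S1S'R]]; exists S'; split=> //.
  exact: reduces_trans rSS1 rS1S'.
apply/subsetP => x; rewrite !inE => /andP[xS' xS].
case: (boolP (x \in S1)) => xS1 /=; last by rewrite xS.
by rewrite S1S'R // inE xS' xS1.
Qed.

Lemma setD_setD1 (S : {set T}) v : S :\: (S :\ v) \subset [set v].
Proof. by apply/subsetP => x; rewrite !inE; case: eqVneq; case: (x \in S). Qed.

Lemma deletable_even (S : {set T}) q :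
  q \in S -> ~~ odd (ec S) -> ~~ odd (deg S q) -> deletable S q [set q].
Proof.
by move=> qS eS eq; exists (S :\ q); rewrite setD_setD1 !inE eqxx; split=> //; apply: reduces_setD1.
Qed.

Lemma deletable_pair (S : {set T}) q y :
    q \in S -> y \in S -> q != y -> ~~ e q y -> ~~ odd (ec S) ->
  odd (deg S q) = odd (deg S y) -> deletable S q [set q; y].
Proof.
move=> qS yS qy nqy eS dqy; exists (S :\ q :\ y); split; first exact: reduces_setD2.
  by rewrite !inE eqxx andbF.
by apply/subsetP => x; rewrite !inE; case: (x \in S); case: (x == q); case: (x == y).
Qed.

Lemma deletable_parity_mismatch (S : {set T}) q y :
    q \in S -> y \in S -> q != y -> ~~ odd (ec S) -> odd (deg S q) ->
  odd (deg S y) != e q y -> deletable S q [set q; y].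
Proof.
move=> qS yS qy eS oq; case: (boolP (e q y)) => [eqy|nqy] mis; last first.
  by apply: deletable_pair => //; rewrite oq; move: mis; case: odd.
have ey : ~~ odd (deg S y) by move: mis; case: odd.
have rSy := reduces_setD1 yS eS ey; have [_ eSy _] := rSy.
apply: deletable_sub (reduces_deletable rSy _).
  by rewrite setUC; apply: setUS; apply: setD_setD1.
apply: deletable_even => //; first by rewrite !inE qS andbT; apply: contraNneq qy => ->.
by move: oq; rewrite (deg_setD1_adj yS eqy) /=.
Qed.

Lemma deletable_nonneighbour (S : {set T}) q y b :
    q \in S -> y \in S -> b \in S -> e y b -> ~~ e q y -> ~~ odd (ec S) ->
    odd (deg S q) -> ~~ odd (deg S y) -> odd (deg S b) = e q b ->
  deletable S q [set q; y; b].
Proof.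
move=> qS yS bS eyb nqy eS oq ey ob.
have qy : q != y by apply: contraTneq oq => ->.
have qb : q != b by apply: contraTneq oq => qb; rewrite qb ob -qb e_irr.
have yb : y != b by apply: contraTneq eyb => ->; rewrite e_irr.
have rSy := reduces_setD1 yS eS ey; have [_ eSy _] := rSy.
have : deletable (S :\ y) q [set q; b].
  apply: deletable_parity_mismatch => //.
  - by rewrite !inE qy.
  - by rewrite !inE eq_sym yb.
  - by rewrite deg_setD1_nonadj.
  - by move: ob; rewrite (deg_setD1_adj yS) 1?e_sym //= => <-; case: odd.
move/(reduces_deletable rSy); apply: deletable_sub.
apply/subsetP => x; rewrite !inE.
by case: (x == q); case: (x == y); case: (x == b); case: (x \in S).
Qed.

Lemma deletable_common_neighbour (S : {set T}) q x1 z1 x2 :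
    q \in S -> x1 \in S -> z1 \in S -> x2 \in S ->
    e x1 z1 -> ~~ e x1 x2 -> ~~ e z1 x2 -> e q x1 -> e q z1 -> e q x2 ->
    ~~ odd (ec S) -> odd (deg S q) -> odd (deg S x1) -> odd (deg S z1) ->
    odd (deg S x2) ->
  deletable S q [set q; x1; z1; x2].
Proof.
move=> qS x1S z1S x2S e11 n12 nz2 q1 qz q2 eS oq o1 oz o2.
have x12 : x1 != x2 by apply: contraNneq nz2 => <-; rewrite e_sym.
have z1x1 : z1 != x1 by apply: contraTneq e11 => ->; rewrite e_irr.
have z1x2 : z1 != x2 by apply: contraNneq n12 => <-.
have r12 := reduces_setD2 x1S x2S x12 n12 eS (etrans o1 (esym o2)).
have [_ e12 _] := r12.
have z1S12 : z1 \in S :\ x1 :\ x2 by rewrite !inE z1x2 z1x1 z1S.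
have ez : ~~ odd (deg (S :\ x1 :\ x2) z1).
  by move: oz; rewrite (deg_setD1_adj x1S) 1?e_sym // -(deg_setD1_nonadj (S :\ x1) nz2).
have r := reduces_trans r12 (reduces_setD1 z1S12 e12 ez); have [_ e3 _] := r.
have q3 : q \in S :\ x1 :\ x2 :\ z1.
  have qx x : e q x -> q != x by apply: contraTneq => ->; rewrite e_irr.
  by rewrite !inE qS !qx.
have eq3 : ~~ odd (deg (S :\ x1 :\ x2 :\ z1) q).
  have x2S1 : x2 \in S :\ x1 by rewrite !inE eq_sym x12.
  move: oq; rewrite (deg_setD1_adj x1S q1) (deg_setD1_adj x2S1 q2).
  by rewrite (deg_setD1_adj z1S12 qz) /= negbK.
apply: deletable_sub (reduces_deletable r (deletable_even q3 e3 eq3)).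
apply/subsetP => x; rewrite !inE.
by case: (x == q); case: (x == x1); case: (x == z1); case: (x == x2); case: (x \in S).
Qed.

Definition induced_2K2 (g : 'I_2 * 'I_2 -> T) : Prop :=
  forall u v, e (g u) (g v) = (u.1 == v.1) && (u.2 != v.2).

(* Assume deg q is odd.  If for some vertex y of the 2K2 the parity of deg y differs
   from the adjacency of y to q, then q can be deleted along with y.  Otherwise, if q
   misses some y, deleting y first creates such a vertex (the neighbour of y);
   otherwise q sees all four vertices and goes after two nonadjacent vertices of the
   2K2 and then a neighbour of one of them. *)
Lemma deletable_2K2 (S : {set T}) q (g : 'I_2 * 'I_2 -> T) :
    induced_2K2 g -> q \in S -> (forall u, g u \in S) -> (forall u, g u != q) ->
    ~~ odd (ec S) ->
  deletable S q (q |: [set g u | u : 'I_2 * 'I_2]).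
Proof.
move=> gi qS gS gq eS; set R := _ |: _.
have qR : q \in R by rewrite setU11.
have gR u : g u \in R by rewrite !inE imset_f ?orbT.
have sub2 u : [set q; g u] \subset R by rewrite subUset !sub1set qR gR.
case: (boolP (odd (deg S q))) => [oq|evq]; last first.
  by apply: deletable_sub (deletable_even qS eS evq); rewrite sub1set.
case: (pickP [pred u | odd (deg S (g u)) != e q (g u)]) => [u mis|deg_adj].
  apply: deletable_sub (sub2 u) (deletable_parity_mismatch qS (gS u) _ eS oq mis).
  by rewrite eq_sym gq.
have {}deg_adj u : odd (deg S (g u)) = e q (g u) by apply/eqP/negbFE/deg_adj.
case: (pickP [pred u | ~~ e q (g u)]) => [u nqu|adj].
  have [w uw] : exists w : 'I_2, u.2 != w.
    by case: u.2 => -[|[|//]] ?; [exists ord_max | exists ord0].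
  have eub : e (g u) (g (u.1, w)) by rewrite gi eqxx.
  have := deletable_nonneighbour qS (gS u) (gS (u.1, w)) eub nqu eS oq.
  rewrite deg_adj (negbTE nqu) => /(_ isT (deg_adj _)); apply: deletable_sub.
  by rewrite !subUset !sub1set qR !gR.
have {}adj u : e q (g u) by apply/negbFE/adj.
have := @deletable_common_neighbour S q (g (ord0, ord0)) (g (ord0, ord_max))
  (g (ord_max, ord0)) qS (gS _) (gS _) (gS _).
rewrite !gi !deg_adj !adj => /(_ isT isT isT isT isT isT eS oq isT isT isT).
by apply: deletable_sub; rewrite !subUset !sub1set qR !gR.
Qed.

Lemma setD_subsetU (A B C : {set T}) : A :\: C \subset (A :\: B) :|: (B :\: C).
Proof. by apply/subsetP => x; rewrite !inE; case: (x \in A); case: (x \in B); case: (x \in C). Qed.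

Lemma reduces_by_2K2 (X S : {set T}) (g : 'I_2 * 'I_2 -> T) m :
    induced_2K2 g -> (forall u, g u \in X :&: S) -> clique_num_le (S :\: X) m.+1 ->
    ~~ odd (ec S) ->
  exists S', [/\ reduces S S',
                 S :\: S' \subset (S :\: X) :|: [set g u | u : 'I_2 * 'I_2]
               & clique_num_le (S' :\: X) m].
Proof.
move=> gi gXS cS eS.
have [S1 [rSS1 /subsetP XS1 cS1 _]] := reduces_to_odd_clique (~: X) eS.
rewrite -setDE in cS1; have [S1S eS1 _] := rSS1.
have S1XS : S1 :\: X \subset S :\: X by apply: setSD.
have SS1 : S :\: S1 \subset S :\: X.
  apply/subsetP => x; rewrite !inE => /andP[xS1 xS]; rewrite xS andbT.
  by apply: contra xS1 => xX; apply: XS1; rewrite !inE xX.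
case: (set_0Vmem (S1 :\: X)) => [S1X0 | [q qS1X]].
  exists S1; split=> //; first exact: subset_trans SS1 (subsetUl _ _).
  by move=> B; rewrite S1X0 subset0 => /eqP-> _; rewrite cards0.
have gS1 u : g u \in S1 by apply: XS1; move: (gXS u); rewrite !inE negbK.
have gq u : g u != q.
  by apply: contraTneq qS1X => <-; move: (gXS u); rewrite !inE => /andP[->].
have qS1 : q \in S1 by move: qS1X; rewrite inE => /andP[].
have [S2 [rS1S2 qS2 S1S2]] := deletable_2K2 gi qS1 gS1 gq eS1.
have [S2S1 _ _] := rS1S2.
exists S2; split; first exact: reduces_trans rSS1 rS1S2.
  apply: subset_trans (setD_subsetU S S1 S2) _.
  rewrite subUset subsetU ?SS1 //=; apply: subset_trans S1S2 _.
  by rewrite subUset subsetUr sub1set inE (subsetP S1XS).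
move=> B BS2 cB; have BS1q : B \subset (S1 :\: X) :\ q.
  apply/subsetP => x xB; move: (subsetP BS2 x xB); rewrite !inE => /andP[xX xS2].
  by rewrite xX (subsetP S2S1) // !andbT; apply: contraTneq xS2 => ->.
apply: leq_trans (subset_leq_card BS1q) _.
by move: (cS _ S1XS cS1); rewrite (cardsD1 q) qS1X.
Qed.

Lemma reduces_by_2K2s (X Y : {set T}) m k : forall (g : nat -> 'I_2 * 'I_2 -> T) S,
    Y \subset X -> (forall j, j < k -> induced_2K2 (g j)) ->
    (forall i j u v, i < k -> j < k -> g i u = g j v -> i = j) ->
    (forall j u, j < k -> g j u \in Y :&: S) ->
    clique_num_le (S :\: X) (m + k) -> ~~ odd (ec S) ->
  exists S', [/\ reduces S S', S :\: S' \subset (S :\: X) :|: Y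
               & clique_num_le (S' :\: X) m].
Proof.
elim: k => [|k IH] g S YX gi gdisj gYS cS eS.
  by exists S; rewrite setDv sub0set -(addn0 m); split=> //; apply: reduces_refl.
have gX j u : j < k.+1 -> g j u \in X by move/(gYS j u); rewrite inE => /andP[/(subsetP YX)].
have gXS u : g 0 u \in X :&: S by rewrite inE gX //; move: (gYS 0 u isT); rewrite inE => /andP[].
rewrite addnS in cS.
have [S1 [rSS1 SS1 cS1]] := reduces_by_2K2 (gi 0 isT) gXS cS eS; have [_ eS1 _] := rSS1.
have gYS1 j u : j < k -> g j.+1 u \in Y :&: S1.
  move=> jk; have := gYS j.+1 u jk; rewrite !inE => /andP[-> gS] /=.
  apply/negPn/negP => gS1; have := subsetP SS1 (g j.+1 u).
  rewrite !inE gS1 gS (gX j.+1 u jk) /= => /(_ isT) /imsetP[v _ /gdisj].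
  by move=> /(_ jk isT).
have gdisj1 i j u v : i < k -> j < k -> g i.+1 u = g j.+1 v -> i = j.
  by move=> ik jk /gdisj-/(_ ik jk) [].
have [S2 [rS1S2 S1S2 cS2]] :=
  IH (fun j => g j.+1) S1 YX (fun j => gi j.+1) gdisj1 gYS1 cS1 eS1.
exists S2; split=> //; first exact: reduces_trans rSS1 rS1S2.
apply: subset_trans (setD_subsetU S S1 S2) _; rewrite subUset; apply/andP; split.
  apply: subset_trans SS1 _; apply: setUS; apply/subsetP => x /imsetP[u _ ->].
  by have := gYS 0 u isT; rewrite inE => /andP[].
apply: subset_trans S1S2 _; apply: setSU; apply: setSD; by have [] := rSS1.
Qed.

(** * Copies of F *)

Lemma copy_F_triangle_free (c : FV -> T) :
  induced_copy_F e c -> clique_num_le [set c u | u : FV] 2.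
Proof.
move=> [cinj cadj] A /subsetP Ac cA.
have -> : A = c @: (c @^-1: A).
  apply/setP => x; apply/idP/imsetP => [xA|[u]]; last by rewrite inE => ? ->.
  by have /imsetP[u _ xu] := Ac x xA; exists u; rewrite // inE -xu.
rewrite card_imset // -(@card_in_imset _ _ (fun u : FV => u.2.1)).
  by rewrite (leq_trans (max_card _)) ?card_ord.
move=> u v; rewrite !inE => uA vA side_uv; apply/eqP; apply: contraTT isT => uv.
have /forall_inP/(_ _ vA) := forall_inP cA _ uA.
by rewrite (inj_eq cinj) uv cadj /Fadj side_uv eqxx andbF.
Qed.

Lemma induced_2K2_slice (c : FV -> T) (j : 'I_5) :
  induced_copy_F e c -> induced_2K2 (fun u => c (u.1, (u.2, j))).
Proof. by move=> [_ cadj] u v; rewrite cadj. Qed.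

Definition copies s (f : 'I_s -> FV -> T) : {set T} := [set f i u | i : 'I_s, u : FV].

Lemma copies_lift s (f : 'I_s.+1 -> FV -> T) :
  copies f = [set f ord0 u | u : FV] :|: copies (fun i => f (lift ord0 i)).
Proof.
apply/setP => x; rewrite inE; apply/imset2P/orP => [[i u _ _ ->]|[/imsetP[u _ ->]|]].
- case: (unliftP ord0 i) => [j ->|->]; last by left; apply: imset_f.
  by right; apply/imset2P; exists j u.
- by exists ord0 u.
- by case/imset2P=> i u _ _ ->; exists (lift ord0 i) u.
Qed.

Lemma even_dec_of_copies s : forall (f : 'I_s -> FV -> T) (S : {set T}),
    (forall i, induced_copy_F e (f i)) -> (forall i j u v, f i u = f j v -> i = j) ->
    copies f \subset S -> clique_num_le (S :\: copies f) s.+2 -> ~~ odd (ec S) ->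
  even_dec S.
Proof.
elim: s => [|s IH] f S fi fdisj fS cS eS.
  apply: triangle_free_even_dec eS; apply: clique_num_le_sub cS.
  by apply/subsetP => x xS; rewrite inE xS andbT; apply/imset2P => -[[]].
set c := f ord0; set g := fun i => f (lift ord0 i).
have [cinj _] := fi ord0.
have X_def := copies_lift f; rewrite -/c -/g in X_def.
have cX : [set c u | u : FV] \subset copies f by rewrite X_def subsetUl.
have slice_disj i j u v : i < 3 -> j < 3 ->
    c (u.1, (u.2, inord i)) = c (v.1, (v.2, inord j)) -> i = j.
  by move=> i3 j3 /cinj [_ _ /(congr1 (@nat_of_ord 5))]; rewrite !inordK //; lia.
have slice_in j u : j < 3 -> c (u.1, (u.2, inord j)) \in [set c u | u : FV] :&: S.
  by move=> _; rewrite inE imset_f // (subsetP fS) // (subsetP cX) ?imset_f.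
rewrite -addn3 in cS.
have [S1 [rSS1 SS1 cS1]] :=
  @reduces_by_2K2s _ _ s 3 (fun j u => c (u.1, (u.2, inord j))) S cX
  (fun j _ => induced_2K2_slice _ (fi ord0)) slice_disj slice_in cS eS.
have [S1S eS1 decS1] := rSS1; apply/decS1/(IH g) => //.
- by move=> i; apply: fi.
- by move=> i j u v /fdisj /lift_inj.
- apply/subsetP => x xg; have xf : x \in copies f by rewrite X_def inE xg orbT.
  apply/negPn/negP => xS1; have := subsetP SS1 x; rewrite !inE xS1 xf (subsetP fS) //=.
  case/(_ isT)/imsetP => u _ xc; case/imset2P: xg xc => i v _ _ -> /fdisj.
  by apply/eqP; rewrite eq_sym neq_lift.
- rewrite -addn2; apply: clique_num_le_sub (clique_num_leU cS1 (copy_F_triangle_free (fi ord0))).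
  apply/subsetP => x; rewrite X_def !inE.
  by case: (x \in S1); case: (x \in [set c u | u : FV]); case: (x \in copies g); rewrite ?orbT.
Qed.

End EvenDecomposition.

(* [even_decomposable e] is [even_dec e [set: T]] by definition. *)
Theorem mainTheorem9 (T : finType) (e : rel T)
  (e_sym : symmetric e) (e_irr : irreflexive e)
  (Heven : ~~ odd (edge_count e [set: T])) :
  (exists t : nat, 0 < t /\
     (exists f : 'I_t -> FV -> T,
        (forall i, induced_copy_F e (f i)) /\
        (forall i j u v, f i u = f j v -> i = j)) /\
     (forall A : {set T}, clique e A -> #|A| <= t)) ->
  even_decomposable e.
Proof.
case=> t [_ [[f [fi fdisj]] cliques_le_t]].
apply: (even_dec_of_copies e_sym e_irr fi fdisj (subsetT _) _ Heven).
by move=> A _ /cliques_le_t At; rewrite (leq_trans At) // -addn2 leq_addr.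
Qed.
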